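(* Let $L_1,\dots,L_n\subset\mathbb{C}^2$ be $n\ge3$ distinct complex lines through the origin and let $a_1,\dots,a_n\in\mathbb{C}\setminus\{0\}$. The set of all standard connections with poles along $L_1,\dots,L_n$ and residue traces $\operatorname{tr}A_i=a_i$ is a complex affine space of dimension $n-3$.
   Context: With $\ell_i$ defining linear forms of $L_i$, a standard connection is a connection on $T\mathbb{C}^2$ (away from the lines) of the form $\nabla=d-\sum_iA_i\frac{d\ell_i}{\ell_i}$ in the frame $\partial_z,\partial_w$, where the $A_i$ are non-zero constant complex $2\times2$ matrices with $\ker A_i=L_i$ for all $i$ and $\sum_iA_i=c\cdot\mathrm{Id}$ for some $c\in\mathbb{C}$. Such a connection is determined by the tuple $(A_1,\dots,A_n)$. *)

From HB Require Import structures.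
From mathcomp Require Import all_boot all_order all_algebra.
From mathcomp Require Import reals complex.
Set Implicit Arguments. Unset Strict Implicit. Unset Printing Implicit Defensive.
Import Order.TTheory GRing.Theory Num.Theory.
Local Open Scope ring_scope.

Notation CC R := (complex R).

(* kernel of the 2x2 matrix A, acting on column vectors (coordinates in the
   frame d/dz, d/dw), equals the subspace L *)
Definition ker_eq {K : fieldType} (A : 'M[K]_2) (L : {vspace 'cV[K]_2}) : Prop :=
  forall v : 'cV[K]_2, A *m v = 0 <-> v \in L.

Definition standard_connection_data {K : fieldType} (n : nat)
    (L : 'I_n -> {vspace 'cV[K]_2}) (a : 'I_n -> K)
    (A : {ffun 'I_n -> 'M[K]_2}) : Prop :=
  (forall i, A i != 0) /\
  (forall i, ker_eq (A i) (L i)) /\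
  (exists c : K, \sum_(i < n) A i = c%:M) /\
  (forall i, \tr (A i) = a i).

Definition affine_space_of_dim {K : fieldType} (V : vectType K) (S : V -> Prop)
    (d : nat) : Prop :=
  exists (P : V) (U : {vspace V}),
    \dim U = d /\ forall x : V, S x <-> (x - P) \in U.

From HB Require Import structures.
From mathcomp Require Import all_boot all_order all_algebra.
From mathcomp Require Import reals complex.
From mathcomp Require Import ring.
Set Implicit Arguments. Unset Strict Implicit. Unset Printing Implicit Defensive.
Import Order.TTheory GRing.Theory Num.Theory.
Local Open Scope ring_scope.

(* Write L_i = <[v_i]>.  With perp2 v = (-v_1, v_0), so that perp2 v *m w is
   det [v w], the identity v *m perp2 w - w *m perp2 v = - det [v w] gives the
   plane geometry needed: nilmx v = v *m perp2 v is trace-free and kills v,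
   every trace-free matrix killing v is a multiple of it, and some E_i kills v_i
   with trace 1.  So the residues killing v_i with trace a_i form the line
   a_i E_i + K nilmx v_i, and a standard connection is a choice of t in K^n with
   \sum_i a_i E_i + \sum_i t_i nilmx v_i scalar.  For three distinct lines the
   nilmx v_i are independent (sandwich a relation between perp2 v_j and v_k),
   so psi : t |-> \sum_i t_i nilmx v_i has image the 3-dimensional space of
   trace-free matrices, a complement of the scalars since 2 != 0.  The
   admissible t thus form a translate of lker psi, of dimension n - 3. *)

Section Plane.
Variable K : fieldType.
Implicit Types (v w u : 'cV[K]_2) (A : 'M[K]_2).

Definition perp2 v : 'rV[K]_2 := \row_j (if j == 0 then - v 1 0 else v 0 0).

Definition det2 v w : K := (perp2 v *m w) 0 0.

Definition nilmx v : 'M[K]_2 := v *m perp2 v.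

Lemma ord2P (i : 'I_2) : i = 0 \/ i = 1.
Proof. by case: i => [[|[|//]] ?]; [left | right]; apply: val_inj. Qed.

Lemma perp2_mul v w : perp2 v *m w = (det2 v w)%:M.
Proof. exact: mx11_scalar. Qed.

Lemma det2E v w : det2 v w = v 0 0 * w 1 0 - v 1 0 * w 0 0.
Proof.
rewrite /det2 mxE !big_ord_recl big_ord0 !mxE /=.
rewrite (_ : lift 0 0 = 1 :> 'I_2); last exact: val_inj.
by rewrite addr0 mulNr addrC.
Qed.

Lemma det2C v w : det2 w v = - det2 v w.
Proof. by rewrite !det2E; ring. Qed.

Lemma det2vv v : det2 v v = 0.
Proof. by rewrite det2E mulrC subrr. Qed.

Lemma mul_perp2_skew v w : v *m perp2 w - w *m perp2 v = (- det2 v w)%:M.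
Proof.
apply/matrixP => i j; rewrite det2E !mxE !big_ord1 !mxE.
by case: (ord2P i) => ->; case: (ord2P j) => ->; rewrite /=; ring.
Qed.

Lemma exists_det2_eq1 v : v != 0 -> exists u, det2 v u = 1.
Proof.
move=> v_neq0; have [j pj_neq0] : exists j, perp2 v 0 j != 0.
  apply/existsP; apply: contraNT v_neq0; rewrite negb_exists => /forallP p0.
  apply/eqP/matrixP => i k; rewrite [k]ord1 mxE.
  have := p0 0; have := p0 1; rewrite !mxE /= !negbK oppr_eq0.
  by case: (ord2P i) => -> /eqP ? /eqP.
exists ((perp2 v 0 j)^-1 *: delta_mx j 0).
by rewrite /det2 -scalemxAr -colE !mxE mulVf //; rewrite mxE in pj_neq0.
Qed.

Lemma det2_eq0_memv v w : v != 0 -> det2 v w = 0 -> w \in <[v]>%VS.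
Proof.
move=> v_neq0 vw0; have [u vu1] := exists_det2_eq1 v_neq0.
have /eqP : v *m perp2 w - w *m perp2 v = 0 by rewrite mul_perp2_skew vw0 oppr0 raddf0.
rewrite subr_eq0 => /eqP/(congr1 (mulmx^~ u)).
rewrite -!mulmxA !perp2_mul vu1 mulmx1 mul_mx_scalar => <-.
exact: memvZ (memv_line v).
Qed.

Lemma det2_eq0_vline v w : v != 0 -> w != 0 -> det2 v w = 0 -> <[v]>%VS = <[w]>%VS.
Proof.
move=> v_neq0 w_neq0 vw0; apply/eqP; rewrite eqEdim !dim_vline v_neq0 w_neq0 andbT.
by rewrite -memvE det2_eq0_memv // det2C vw0 oppr0.
Qed.

Lemma ker_eq_vline A v : v != 0 -> A != 0 -> A *m v = 0 -> ker_eq A <[v]>%VS.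
Proof.
move=> v_neq0 A_neq0 Av0 w; split=> [Aw0 | /vlineP [k ->]]; last first.
  by rewrite -scalemxAr Av0 scaler0.
apply: det2_eq0_memv v_neq0 _.
have := congr1 (mulmx A) (mul_perp2_skew v w).
rewrite mulmxBr !mulmxA Av0 Aw0 !mul0mx subrr mul_mx_scalar => /esym/eqP.
by rewrite scaler_eq0 oppr_eq0 (negbTE A_neq0) orbF => /eqP.
Qed.

Lemma nilmx_mul v w : nilmx v *m w = det2 v w *: v.
Proof. by rewrite -mulmxA perp2_mul mul_mx_scalar. Qed.

Lemma nilmx_mul_self v : nilmx v *m v = 0.
Proof. by rewrite nilmx_mul det2vv scale0r. Qed.

Lemma tr_nilmx v : \tr (nilmx v) = 0.
Proof. by rewrite mxtrace_mulC perp2_mul det2vv mxtrace_scalar. Qed.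

Lemma nilmx_eq0 v : (nilmx v == 0) = (v == 0).
Proof.
apply/idP/idP => [|/eqP ->]; last by rewrite /nilmx mul0mx.
apply: contraLR => v_neq0; have [u vu1] := exists_det2_eq1 v_neq0.
by apply: contra_neq v_neq0 => N0; rewrite -[v]scale1r -vu1 -nilmx_mul N0 mul0mx.
Qed.

Lemma perp2_nilmx_mul u v w : perp2 u *m nilmx v *m w = (det2 u v * det2 v w)%:M.
Proof. by rewrite mulmxA perp2_mul -mulmxA perp2_mul -scalar_mxM. Qed.

Lemma annihilator_tr0_nilmx A v : v != 0 -> A *m v = 0 -> \tr A = 0 ->
  exists t, A = t *: nilmx v.
Proof.
move=> v_neq0 Av0 trA0; have [u vu1] := exists_det2_eq1 v_neq0.
have AE : A = A *m u *m perp2 v.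
  have := congr1 (mulmx A) (mul_perp2_skew v u).
  rewrite mulmxBr !mulmxA Av0 mul0mx sub0r vu1 mul_mx_scalar scaleN1r.
  by move/oppr_inj.
have : det2 v (A *m u) = 0.
  by rewrite -trA0 [in RHS]AE mxtrace_mulC perp2_mul mxtrace_scalar.
case/(det2_eq0_memv v_neq0)/vlineP => t Aut.
by exists t; rewrite AE Aut -scalemxAl.
Qed.

Lemma exists_annihilator_tr1 v : v != 0 -> exists E, E *m v = 0 /\ \tr E = 1.
Proof.
move=> /exists_det2_eq1 [u vu1]; exists (u *m perp2 v); split.
  by rewrite -mulmxA perp2_mul det2vv raddf0 mulmx0.
by rewrite mxtrace_mulC perp2_mul mxtrace_scalar vu1.
Qed.

Lemma nilmx3_coef_eq0 v0 v1 v2 t0 t1 t2 :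
  det2 v1 v0 != 0 -> det2 v0 v2 != 0 ->
  t0 *: nilmx v0 + t1 *: nilmx v1 + t2 *: nilmx v2 = 0 -> t0 = 0.
Proof.
move=> h10 h02 /(congr1 (fun M => perp2 v1 *m M *m v2)).
rewrite mulmx0 mul0mx !mulmxDr !mulmxDl -!scalemxAr -!scalemxAl !perp2_nilmx_mul.
move/matrixP/(_ 0 0); rewrite !mxE /= !mulr1n !det2vv !(mul0r, mulr0, addr0).
move/eqP.
by rewrite !mulf_eq0 (negbTE h10) (negbTE h02) !orbF => /eqP.
Qed.

Lemma free_nilmx3 v0 v1 v2 :
  det2 v0 v1 != 0 -> det2 v0 v2 != 0 -> det2 v1 v2 != 0 ->
  free [tuple nilmx v0; nilmx v1; nilmx v2].
Proof.
move=> h01 h02 h12; have swap x y : det2 x y != 0 -> det2 y x != 0.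
  by rewrite det2C oppr_eq0.
apply/freeP => k; rewrite !big_ord_recl big_ord0 addr0 /= addrA => k0.
have k0_0 := nilmx3_coef_eq0 (swap _ _ h01) h02 k0.
move: (k0); rewrite (addrC (k ord0 *: _)) => /(nilmx3_coef_eq0 h01 h12) k1_0.
move: (k0); rewrite addrC addrA => /(nilmx3_coef_eq0 h02 (swap _ _ h12)) k2_0.
case=> [[|[|[|//]]] ?]; [rewrite -k0_0 | rewrite -k1_0 | rewrite -k2_0].
all: by congr k; apply: val_inj.
Qed.

Lemma scalar1_neq0 : (1%:M : 'M[K]_2) != 0.
Proof. exact: oner_neq0. Qed.

End Plane.

Definition scale_fam (R : pzRingType) (V : lmodType R) n (f : 'I_n -> V)
    (t : 'rV[R]_n) : {ffun 'I_n -> V} :=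
  [ffun i => t 0 i *: f i].

Fact scale_fam_is_linear (R : pzRingType) (V : lmodType R) n (f : 'I_n -> V) :
  linear (scale_fam f).
Proof. by move=> k t t'; apply/ffunP => i; rewrite !ffunE !mxE scalerDl scalerA. Qed.

HB.instance Definition _ (R : pzRingType) (V : lmodType R) n (f : 'I_n -> V) :=
  GRing.isLinear.Build R 'rV[R]_n {ffun 'I_n -> V} _ (scale_fam f)
    (scale_fam_is_linear f).

Definition lincomb (R : pzRingType) (V : lmodType R) n (f : 'I_n -> V)
    (t : 'rV[R]_n) : V :=
  \sum_i t 0 i *: f i.

Fact lincomb_is_linear (R : pzRingType) (V : lmodType R) n (f : 'I_n -> V) :
  linear (lincomb f).
Proof.
move=> k t t'; rewrite /lincomb scaler_sumr -big_split; apply: eq_bigr => i _.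
by rewrite !mxE scalerDl scalerA.
Qed.

HB.instance Definition _ (R : pzRingType) (V : lmodType R) n (f : 'I_n -> V) :=
  GRing.isLinear.Build R 'rV[R]_n V _ (lincomb f) (lincomb_is_linear f).

Definition residue_data (K : fieldType) n (v : 'I_n -> 'cV[K]_2) (a : 'I_n -> K)
    (x : {ffun 'I_n -> 'M[K]_2}) : Prop :=
  [/\ forall i, x i *m v i = 0, forall i, \tr (x i) = a i
    & exists c, \sum_i x i = c%:M].

Lemma residue_data_shift (K : fieldType) n (v : 'I_n -> 'cV[K]_2) a P x :
  residue_data v a P ->
  residue_data v a x <-> residue_data v (fun=> 0) (x - P).
Proof.
case=> Pv0 trP [c sumP]; have xPE i : (x - P) i = x i - P i by rewrite !ffunE.
have sumxP : \sum_i (x - P) i = \sum_i x i - c%:M.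
  by under eq_bigr do rewrite xPE; rewrite sumrB sumP.
split=> [[xv0 trx [d sumx]] | [xPv0 trxP [d sumxP0]]]; split=> [i|i|].
- by rewrite xPE mulmxBl xv0 Pv0 subrr.
- by rewrite xPE linearB /= trx trP subrr.
- by exists (d - c); rewrite sumxP sumx raddfB.
- by have := xPv0 i; rewrite xPE mulmxBl Pv0 subr0.
- by have := trxP i; rewrite xPE linearB /= trP => /subr0_eq.
- by exists (d + c); apply/eqP; rewrite raddfD -subr_eq -sumxP sumxP0.
Qed.

Section Residues.
Variables (K : fieldType) (n : nat) (v : 'I_n -> 'cV[K]_2).
Hypothesis two_neq0 : (2 : K) != 0.
Hypothesis n_ge3 : (3 <= n)%N.
Hypothesis v_neq0 : forall i, v i != 0.
Hypothesis det2_neq0 : forall i j, i != j -> det2 (v i) (v j) != 0.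

Let N i := nilmx (v i).
Let psi : 'Hom('rV[K]_n, 'M[K]_2) := linfun (lincomb N).
Let Phi : 'Hom('rV[K]_n, {ffun 'I_n -> 'M[K]_2}) := linfun (scale_fam N).

Lemma PhiE t i : Phi t i = t 0 i *: N i.
Proof. by rewrite lfunE ffunE. Qed.

Lemma psiE t : psi t = \sum_i Phi t i.
Proof. by rewrite lfunE; apply: eq_bigr => i _; rewrite PhiE. Qed.

Lemma psi_eq_scalar t c : psi t = c%:M -> c = 0.
Proof.
have tr_psi : \tr (psi t) = 0.
  by rewrite psiE raddf_sum big1 // => i _ /=; rewrite PhiE mxtraceZ tr_nilmx mulr0.
move: tr_psi => /[swap] ->; rewrite mxtrace_scalar -mulr_natr => /eqP.
by rewrite mulf_eq0 (negbTE two_neq0) orbF => /eqP.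
Qed.

Lemma limg_psi_cap1 : (limg psi :&: <[1%:M]>)%VS = 0%VS.
Proof.
apply/eqP; rewrite -subv0; apply/subvP => _ /memv_capP [/memv_imgP [t _ ->]].
case/vlineP => c; rewrite scalemx1 => psit.
by rewrite psit (psi_eq_scalar psit) raddf0 memv0.
Qed.

Lemma psi_delta j : psi (delta_mx 0 j) = N j.
Proof.
rewrite psiE (bigD1 j) //= big1 => [|i ij]; rewrite PhiE !mxE.
  by rewrite !eqxx scale1r addr0.
by rewrite (negbTE ij) scale0r.
Qed.

Lemma dim_limg_psi : \dim (limg psi) = 3%N.
Proof.
pose j k (lt_k3 : (k < 3)%N) := Ordinal (leq_trans lt_k3 n_ge3).
pose X := [tuple N (j 0%N isT); N (j 1%N isT); N (j 2%N isT)].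
have dimX : \dim <<X>> = 3%N by apply/eqP/free_nilmx3; apply: det2_neq0.
apply/anti_leq/andP; split.
  have := dimvS (subvf (limg psi + <[1%:M]>)%VS).
  rewrite dimv_disjoint_sum ?limg_psi_cap1 // dim_vline scalar1_neq0 dimvf /=.
  by rewrite dim_matrix addn1 ltnS.
rewrite -dimX dimvS //; apply/span_subvP => M; rewrite !inE => /or3P [] /eqP ->.
all: by rewrite -psi_delta memv_img ?memvf.
Qed.

Lemma limg_psi_add1 : (limg psi + <[1%:M]>)%VS = fullv.
Proof.
apply/eqP; rewrite eqEdim subvf /= dimv_disjoint_sum ?limg_psi_cap1 //.
by rewrite dim_limg_psi dim_vline scalar1_neq0 dimvf /= dim_matrix.
Qed.

Lemma lker_Phi : lker Phi = 0%VS.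
Proof.
apply/eqP/lker0P => t t' /ffunP Phitt'; apply/rowP => i; move/eqP: (Phitt' i).
rewrite !PhiE -subr_eq0 -scalerBl scaler_eq0 nilmx_eq0 (negbTE (v_neq0 i)) orbF.
by rewrite subr_eq0 => /eqP.
Qed.

Lemma dim_img_lker_psi : \dim (Phi @: lker psi) = (n - 3)%N.
Proof.
rewrite limg_dim_eq ?lker_Phi ?capv0 //.
have := limg_ker_dim psi fullv; rewrite capfv dim_limg_psi dimvf /= dim_matrix mul1r.
by move/(congr1 (subn^~ 3%N)); rewrite addnK.
Qed.

Lemma residue_data0P y :
  residue_data v (fun=> 0) y <-> y \in (Phi @: lker psi)%VS.
Proof.
split=> [[yv0 try0 [c sumy]] | /memv_imgP [t]].
  have [t yE] := fin_all_exists (fun i =>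
    annihilator_tr0_nilmx (v_neq0 i) (yv0 i) (try0 i)).
  have yPhi : y = Phi (\row_i t i) by apply/ffunP => i; rewrite PhiE mxE yE.
  rewrite yPhi memv_img // memv_ker; move: sumy; rewrite yPhi -psiE => psit.
  by rewrite psit (psi_eq_scalar psit) raddf0.
rewrite memv_ker => /eqP psit0 ->; split=> [i|i|].
- by rewrite PhiE -scalemxAl nilmx_mul_self scaler0.
- by rewrite PhiE mxtraceZ tr_nilmx mulr0.
- by exists 0; rewrite -psiE psit0 raddf0.
Qed.

Lemma residue_data_exists a : exists P, residue_data v a P.
Proof.
have [E EE] := fin_all_exists (fun i => exists_annihilator_tr1 (v_neq0 i)).
have : \sum_i a i *: E i \in (limg psi + <[1%:M]>)%VS by rewrite limg_psi_add1 memvf.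
case/memv_addP => _ /memv_imgP [t _ ->] [_ /vlineP [c ->] sumE].
exists [ffun i => a i *: E i - Phi t i]; split=> [i|i|].
- by rewrite ffunE PhiE mulmxBl -!scalemxAl (EE i).1 nilmx_mul_self !scaler0 subrr.
- by rewrite ffunE PhiE raddfB /= !mxtraceZ (EE i).2 tr_nilmx mulr1 mulr0 subr0.
- exists c; under eq_bigr do rewrite ffunE.
  by rewrite sumrB sumE -psiE addrAC subrr add0r scalemx1.
Qed.

Theorem residue_data_affine a : affine_space_of_dim (residue_data v a) (n - 3).
Proof.
have [P Pa] := residue_data_exists a.
exists P, (Phi @: lker psi)%VS; split=> [|x]; first exact: dim_img_lker_psi.
exact: iff_trans (residue_data_shift _ Pa) (residue_data0P _).
Qed.

End Residues.

Lemma standard_connection_residueP (K : fieldType) n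
    (L : 'I_n -> {vspace 'cV[K]_2}) (v : 'I_n -> 'cV[K]_2) a x :
  (forall i, L i = <[v i]>%VS) -> (forall i, v i != 0) -> (forall i, a i != 0) ->
  standard_connection_data L a x <-> residue_data v a x.
Proof.
move=> Lv v_neq0 a_neq0; split=> [[_ [xker [sumx trx]]] | [xv0 trx sumx]].
  by split=> // i; apply/(xker i); rewrite Lv memv_line.
have x_neq0 i : x i != 0.
  by apply: contra_neq (a_neq0 i) => x0; rewrite -trx x0 raddf0.
by split=> //; split=> [i|]; first by rewrite Lv; apply: ker_eq_vline.
Qed.

Lemma vline_vpick (K : fieldType) (vT : vectType K) (U : {vspace vT}) :
  \dim U = 1%N -> U = <[vpick U]>%VS.
Proof.
move=> dimU; apply/esym/eqP; rewrite eqEdim -memvE memv_pick dimU dim_vline.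
by rewrite vpick0 -dimv_eq0 dimU.
Qed.

Theorem lemma10 (R : realType) (n : nat) (L : 'I_n -> {vspace 'cV[CC R]_2})
    (a : 'I_n -> CC R) :
  (3 <= n)%N ->
  (forall i, \dim (L i) = 1%N) ->
  injective L ->
  (forall i, a i != 0) ->
  affine_space_of_dim
    (V := {ffun 'I_n -> 'M[CC R]_2})
    (standard_connection_data L a) (n - 3)%N.
Proof.
move=> n_ge3 dimL injL a_neq0.
pose v i := vpick (L i).
have Lv i : L i = <[v i]>%VS by apply: vline_vpick.
have v_neq0 i : v i != 0 by rewrite vpick0 -dimv_eq0 dimL.
have det2_neq0 i j : i != j -> det2 (v i) (v j) != 0.
  apply: contra_neq => /(det2_eq0_vline (v_neq0 i) (v_neq0 j)).
  by rewrite -!Lv => /injL.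
have two_neq0 : (2 : CC R) != 0 by rewrite pnatr_eq0.
have [P [U [dimU affU]]] := residue_data_affine two_neq0 n_ge3 v_neq0 det2_neq0 a.
exists P, U; split=> // x; apply: iff_trans (affU x).
exact: standard_connection_residueP.
Qed.
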